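(* Let $L\ge2$, let $\mathcal{L}$ and $\mathcal{U}$ be label sets of size $L$, and fix a distinguished $z\in\mathcal{L}$. Let $H$ be a Pauli Hamiltonian whose terms are operators $P_{u,\ell}$ ($u\in\mathcal{U},\ell\in\mathcal{L}$) and $Q_\ell$ ($\ell\in\mathcal{L}\setminus\{z\}$) such that all $P_{u,\ell}$ mutually commute and $Q_\ell$ commutes with $P_{u,\ell'}$ if and only if $\ell'=\ell$. Let $\mathcal{G}$ be the grouping with groups $\{P_{u,\ell}:u\in\mathcal{U}\}\cup\{Q_\ell\}$ for $\ell\neq z$ and $\{P_{u,z}:u\in\mathcal{U}\}$, and let $\mathcal{G}'$ be the grouping with groups $\{P_{u,\ell}:u\in\mathcal{U},\ell\in\mathcal{L}\}$ and $\{Q_\ell\}$ for $\ell\ne z$. Then there exists an overlapped grouping $\mathcal{R}$ with $L$ groups which is a repacking of $\mathcal{G}$ and also (after a suitable reindexing of the groups of $\mathcal{G}'$) a repacking of $\mathcal{G}'$.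
   Context: A grouping of a Pauli Hamiltonian is a list of pairwise disjoint sets of mutually commuting Pauli terms covering all terms; an overlapped grouping drops disjointness. A repacking of a grouping $(G^{[1]},\dots,G^{[m]})$ is an overlapped grouping $(G'^{[1]},\dots,G'^{[m]})$ with the same number of groups and $G^{[j]}\subseteq G'^{[j]}$ for every $j$. *)

From HB Require Import structures.
From mathcomp Require Import all_boot.
Set Implicit Arguments. Unset Strict Implicit. Unset Printing Implicit Defensive.

(* Single-qubit Pauli operators, up to phase: I, X, Y, Z. *)
Inductive pauli1 := PI | PX | PY | PZ.

Definition pauli1_code (a : pauli1) : 'I_4 :=
  match a with PI => inord 0 | PX => inord 1 | PY => inord 2 | PZ => inord 3 end.
Definition pauli1_decode (i : 'I_4) : pauli1 :=
  match val i with 0 => PI | 1 => PX | 2 => PY | _ => PZ end.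
Lemma pauli1_codeK : cancel pauli1_code pauli1_decode.
Proof. by case; rewrite /pauli1_decode /= inordK. Qed.
HB.instance Definition _ := Finite.copy pauli1 (can_type pauli1_codeK).

(* Pauli strings on n qubits (phases/coefficients are irrelevant for
   commutation and grouping). *)
Definition pauli (n : nat) := n.-tuple pauli1.

Definition anticomm1 (a b : pauli1) : bool :=
  [&& a != PI, b != PI & a != b].

Definition pcommute n (p q : pauli n) : bool :=
  ~~ odd (count (fun ab => anticomm1 ab.1 ab.2) (zip p q)).

Definition commuting_set n (S : {set pauli n}) : Prop :=
  forall p q, p \in S -> q \in S -> pcommute p q.

Definition overlapped_grouping n (I : finType) (H : {set pauli n})
    (G : I -> {set pauli n}) : Prop :=
  (forall i, G i \subset H) /\ (forall i, commuting_set (G i)) /\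
  \bigcup_(i : I) G i = H.

Definition grouping n (I : finType) (H : {set pauli n})
    (G : I -> {set pauli n}) : Prop :=
  overlapped_grouping H G /\
  (forall i j, i != j -> [disjoint G i & G j]).

(* R is a repacking of the grouping G (same number of groups = same index
   type, groupwise inclusion G i \subset R i). *)
Definition repacking n (I : finType) (H : {set pauli n})
    (G R : I -> {set pauli n}) : Prop :=
  grouping H G /\ overlapped_grouping H R /\ (forall i, G i \subset R i).

(* The common repacking is the groupwise union R l = G l :|: G' l, with the
   identity reindexing: R z is the set of all P-terms and R l = G l for
   l <> z, both commuting sets.  That G and G' are groupings at all rests on
   two consequences of the commutation pattern: no P-term equals a Q-term
   (Q_l anticommutes with P_{u,z}, which commutes with every P-term), and Q is
   injective off z (Q_l commutes with P_{u,l'} exactly when l' = l). *)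
From mathcomp Require Import all_boot.

Lemma anticomm1C (a b : pauli1) : anticomm1 a b = anticomm1 b a.
Proof. by rewrite /anticomm1 andbCA (eq_sym a b). Qed.

Lemma anticomm1xx (a : pauli1) : anticomm1 a a = false.
Proof. by rewrite /anticomm1 eqxx !andbF. Qed.

Lemma pcommuteC {n} (p q : pauli n) : pcommute p q = pcommute q p.
Proof.
rewrite /pcommute; congr (~~ odd _).
elim: (tval p) (tval q) => [|a s IHs] [|b t] //=.
by rewrite IHs anticomm1C.
Qed.

Lemma pcommutexx {n} (p : pauli n) : pcommute p p.
Proof.
rewrite /pcommute; suff -> : forall s : seq pauli1,
  count (fun ab => anticomm1 ab.1 ab.2) (zip s s) = 0 by [].
by elim=> [|a s IHs] //=; rewrite IHs anticomm1xx.
Qed.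

Lemma commuting_sub {n} {S T : {set pauli n}} :
  S \subset T -> commuting_set T -> commuting_set S.
Proof. by move=> /subsetP sST commT p q /sST Tp /sST Tq; apply: commT. Qed.

Lemma commuting_set1 {n} (p : pauli n) : commuting_set [set p].
Proof. by move=> _ _ /set1P -> /set1P ->; apply: pcommutexx. Qed.

Lemma commuting_setU {n} {S T : {set pauli n}} :
  commuting_set S -> commuting_set T ->
  (forall p q, p \in S -> q \in T -> pcommute p q) ->
  commuting_set (S :|: T).
Proof.
move=> commS commT commST p q /setUP[Sp|Tp] /setUP[Sq|Tq].
- exact: commS.
- exact: commST.
- by rewrite pcommuteC; apply: commST.
- exact: commT.
Qed.

Lemma overlapped_grouping_intro {n} {I : finType} {H : {set pauli n}}
    {G : I -> {set pauli n}} :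
  (forall i, G i \subset H) -> (forall i, commuting_set (G i)) ->
  (forall x, x \in H -> exists i, x \in G i) ->
  overlapped_grouping H G.
Proof.
move=> GH commG coverG; split=> //; split=> //.
apply/eqP; rewrite eqEsubset; apply/andP; split; first exact/bigcupsP.
by apply/subsetP => x /coverG[i Gix]; apply/bigcupP; exists i.
Qed.

Lemma disjoint_groups {I T : finType} {G : I -> {set T}} :
  (forall i j x, x \in G i -> x \in G j -> i = j) ->
  forall i j, i != j -> [disjoint G i & G j].
Proof.
move=> memG_inj i j neq_ij; rewrite disjoint_subset; apply/subsetP => x Gix.
by rewrite !inE; apply: contra neq_ij => Gjx; rewrite (memG_inj _ _ _ Gix Gjx).
Qed.

Lemma overlapped_groupingU {n} {I : finType} {H : {set pauli n}}
    {G G' : I -> {set pauli n}} :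
  overlapped_grouping H G -> overlapped_grouping H G' ->
  (forall i, commuting_set (G i :|: G' i)) ->
  overlapped_grouping H (fun i => G i :|: G' i).
Proof.
move=> [GH [_ coverG]] [G'H [_ coverG']] commGG'.
split; first by move=> i; rewrite subUset GH G'H.
by split; last by rewrite big_split /= coverG coverG' setUid.
Qed.

Lemma repacking_setU {n} {I : finType} {H : {set pauli n}}
    {G G' : I -> {set pauli n}} :
  grouping H G -> grouping H G' ->
  (forall i, commuting_set (G i :|: G' i)) ->
  repacking H G (fun i => G i :|: G' i) /\
  repacking H G' (fun i => G i :|: G' i).
Proof.
move=> groupG groupG' commGG'.
have ogU := overlapped_groupingU groupG.1 groupG'.1 commGG'.
by split; split=> //; split=> // i; [apply: subsetUl | apply: subsetUr].
Qed.

Section LabelledHamiltonian.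

Context {n : nat} {Lab Ulab : finType} {z : Lab}.
Context {P : Ulab -> Lab -> pauli n} {Q : Lab -> pauli n}.
Hypothesis P_inj : forall u l u' l', P u l = P u' l' -> u = u' /\ l = l'.
Hypothesis P_commute : forall u l u' l', pcommute (P u l) (P u' l').
Hypothesis QP_commute :
  forall l, l != z -> forall u l', pcommute (Q l) (P u l') = (l' == l).

Definition Pterms : {set pauli n} := [set P ul.1 ul.2 | ul : Ulab * Lab].

Definition ham : {set pauli n} := Pterms :|: [set Q l | l in [set~ z]].

Definition grp (l : Lab) : {set pauli n} :=
  if l == z then [set P u l | u : Ulab]
  else [set P u l | u : Ulab] :|: [set Q l].

Definition grp' (l : Lab) : {set pauli n} :=
  if l == z then Pterms else [set Q l].

Lemma P_neq_Q {u l l'} : l' != z -> P u l <> Q l'.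
Proof.
move=> zl' PQ; have := QP_commute _ zl' u z.
by rewrite -PQ P_commute eq_sym (negbTE zl').
Qed.

Lemma Q_inj (u0 : Ulab) {l l'} : l != z -> l' != z -> Q l = Q l' -> l = l'.
Proof.
move=> zl zl' QQ; have := QP_commute _ zl u0 l.
by rewrite eqxx QQ QP_commute // => /eqP.
Qed.

Lemma hamP x :
  reflect ((exists u l, x = P u l) \/ (exists2 l, l != z & x = Q l))
          (x \in ham).
Proof.
apply: (iffP setUP) => [[/imsetP[[u l] _ ->]|/imsetP[l]]|].
- by left; exists u, l.
- by rewrite !inE => zl ->; right; exists l.
move=> [[u [l ->]]|[l zl ->]].
- by left; apply/imsetP; exists (u, l).
- by right; apply/imsetP; exists l; rewrite ?inE.
Qed.

Lemma grpP l x :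
  reflect ((exists u, x = P u l) \/ (l != z /\ x = Q l)) (x \in grp l).
Proof.
rewrite /grp; case: ifPn => [/eqP -> | zl].
  by apply: (iffP imsetP) => [[u _ ->]|[[u ->]|[]]] //; [left | ]; exists u.
apply: (iffP setUP) => [[/imsetP[u _ ->]|/set1P ->]|[[u ->]|[_ ->]]].
- by left; exists u.
- by right.
- by left; apply/imsetP; exists u.
- by right; apply/set1P.
Qed.

Lemma grp'P l x :
  reflect ((l == z /\ exists u l', x = P u l') \/ (l != z /\ x = Q l))
          (x \in grp' l).
Proof.
rewrite /grp'; case: ifPn => zl.
  apply: (iffP imsetP) => [[[u l'] _ ->]|[[_ [u [l' ->]]]|[]]] //.
  - by left; split => //; exists u, l'.
  - by exists (u, l').
by apply: (iffP set1P) => [->|[[]|[_ ->]]] //; right.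
Qed.

Lemma setU_grp l : grp l :|: grp' l = if l == z then Pterms else grp l.
Proof.
rewrite /grp /grp'; case: ifPn => [/eqP -> | _]; last exact/setUidPl/subsetUr.
by apply/setUidPr/subsetP => _ /imsetP[u _ ->]; apply/imsetP; exists (u, z).
Qed.

Lemma commuting_grpU l : commuting_set (grp l :|: grp' l).
Proof.
have commPl : commuting_set [set P u l | u : Ulab].
  by move=> _ _ /imsetP[u _ ->] /imsetP[u' _ ->].
rewrite setU_grp; case: ifPn => [_ | zl].
  by move=> _ _ /imsetP[[u l1] _ ->] /imsetP[[u' l2] _ ->].
rewrite /grp (negbTE zl); apply: commuting_setU commPl (commuting_set1 (Q l)) _.
by move=> _ _ /imsetP[u _ ->] /set1P ->; rewrite pcommuteC QP_commute.
Qed.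

Lemma grouping_grp (u0 : Ulab) : grouping ham grp.
Proof.
split.
  apply: overlapped_grouping_intro => [l | l | x].
  - by apply/subsetP => x /grpP[[u ->]|[zl ->]]; apply/hamP;
      [left; exists u, l | right; exists l].
  - exact: commuting_sub (subsetUl _ _) (commuting_grpU l).
  - by case/hamP => [[u [l ->]]|[l zl ->]]; exists l; apply/grpP;
      [left; exists u | right].
apply: disjoint_groups => i j x /grpP[[u ->]|[zi ->]] /grpP[[u' PP]|[zj QQ]].
- by case: (P_inj _ _ _ _ PP).
- by case: (P_neq_Q zj QQ).
- by case: (P_neq_Q zi (esym PP)).
- exact: (Q_inj u0 zi zj QQ).
Qed.

Lemma grouping_grp' (u0 : Ulab) : grouping ham grp'.
Proof.
split.
  apply: overlapped_grouping_intro => [l | l | x].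
  - apply/subsetP => x /grp'P[[_ [u [l' ->]]]|[zl ->]]; apply/hamP.
      by left; exists u, l'.
    by right; exists l.
  - exact: commuting_sub (subsetUr _ _) (commuting_grpU l).
  - case/hamP => [[u [l ->]]|[l zl ->]].
      by exists z; apply/grp'P; left; split => //; exists u, l.
    by exists l; apply/grp'P; right.
apply: disjoint_groups => i j x.
case/grp'P => [[/eqP -> [u [l ->]]]|[zi ->]].
all: case/grp'P => [[/eqP -> [u' [l' PP]]]|[zj QQ]].
- by [].
- by case: (P_neq_Q zj QQ).
- by case: (P_neq_Q zi (esym PP)).
- exact: (Q_inj u0 zi zj QQ).
Qed.

End LabelledHamiltonian.

Theorem lemma3 (n : nat) (Lab Ulab : finType) (z : Lab)
    (P : Ulab -> Lab -> pauli n) (Q : Lab -> pauli n) :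
  2 <= #|Lab| ->
  #|Ulab| = #|Lab| ->
  (* the terms P_{u,l} are pairwise distinct terms of H *)
  (forall u l u' l', P u l = P u' l' -> u = u' /\ l = l') ->
  (* all P_{u,l} mutually commute *)
  (forall u l u' l', pcommute (P u l) (P u' l')) ->
  (* for l <> z, Q_l commutes with P_{u,l'} iff l' = l *)
  (forall l, l != z -> forall u l', pcommute (Q l) (P u l') = (l' == l)) ->
  let H : {set pauli n} :=
    [set P ul.1 ul.2 | ul : Ulab * Lab] :|: [set Q l | l in [set~ z]] in
  let G : Lab -> {set pauli n} := fun l =>
    if l == z then [set P u l | u : Ulab]
    else [set P u l | u : Ulab] :|: [set Q l] in
  let G' : Lab -> {set pauli n} := fun l =>
    if l == z then [set P ul.1 ul.2 | ul : Ulab * Lab]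
    else [set Q l] in
  exists R : Lab -> {set pauli n},
    repacking H G R /\
    exists sigma : Lab -> Lab, bijective sigma /\ repacking H (fun l => G' (sigma l)) R.
Proof.
move=> two_le_L cardU P_inj P_commute QP_commute H G G'.
have /card_gt0P[u0 _] : 0 < #|Ulab| by rewrite cardU ltnW.
have [repG repG'] := repacking_setU
  (grouping_grp P_inj P_commute QP_commute u0)
  (grouping_grp' P_commute QP_commute u0) (commuting_grpU P_commute QP_commute).
exists (fun l => G l :|: G' l); split; first exact: repG.
by exists id; split; [exists id | exact: repG'].
Qed.
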